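(* Let $L$ be a finite set of axis-aligned line segments in the plane, and let $\mathcal{C}$ be the collection of associated subsets of the rectangular cells of the arrangement of $L$. For any three line segments $\ell, \ell', \ell'' \in L$, there are at most two subsets in $\mathcal{C}$ containing all three of $\ell, \ell', \ell''$.
   Context: A cell of the arrangement of $L$ is a maximal connected region of the plane not intersected by any segment of $L$. A cell is rectangular if its boundary is formed by exactly four segments of $L$; its associated subset is the set $\{\ell_1,\ell_2,\ell_3,\ell_4\}\subseteq L$ of these four bounding segments. $\mathcal{C}$ is the collection of associated subsets of all rectangular cells. *)

From HB Require Import structures.
From mathcomp Require Import all_boot all_order all_algebra.
From mathcomp Require Import all_classical all_reals all_analysis.
Set Implicit Arguments. Unset Strict Implicit. Unset Printing Implicit Defensive.
Import Order.TTheory GRing.Theory Num.Theory.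
Import numFieldNormedType.Exports.
Local Open Scope classical_set_scope.
Local Open Scope ring_scope.

Section ArrangementDefs.
Variable R : realType.
Notation pt := (R * R)%type.

Definition seg_pts (p q : pt) : set pt :=
  [set z | exists2 t : R, 0 <= t <= 1 &
           z = ((1 - t) * p.1 + t * q.1, (1 - t) * p.2 + t * q.2)].

Definition axis_segment (s : set pt) : Prop :=
  exists p q : pt, (p.1 = q.1 \/ p.2 = q.2) /\ s = seg_pts p q.

Definition arr_complement (L : set (set pt)) : set pt :=
  ~` (\bigcup_(l in L) l).

Definition is_cell (L : set (set pt)) (C : set pt) : Prop :=
  exists x, arr_complement L x /\ C = connected_component (arr_complement L) x.

Definition boundary (A : set pt) : set pt := closure A `\` interior A.

Definition forms_boundary (l C : set pt) : Prop :=
  exists x y : pt, x <> y /\ l x /\ l y /\ boundary C x /\ boundary C y.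

Definition assoc_subset (L : set (set pt)) (C : set pt) : set (set pt) :=
  [set l | L l /\ forms_boundary l C].

Definition rectangular_cell (L : set (set pt)) (C : set pt) : Prop :=
  is_cell L C /\ (assoc_subset L C #= `I_4)%card.

Definition rect_subsets (L : set (set pt)) : set (set (set pt)) :=
  [set S | exists C, rectangular_cell L C /\ S = assoc_subset L C].

End ArrangementDefs.

From HB Require Import structures.
From mathcomp Require Import all_boot all_order all_algebra.
From mathcomp Require Import all_classical all_reals all_analysis.
From mathcomp Require Import ring lra.
Import Order.TTheory GRing.Theory Num.Theory.
Import numFieldNormedType.Exports.
Local Open Scope classical_set_scope.
Local Open Scope ring_scope.
Set Implicit Arguments. Unset Strict Implicit. Unset Printing Implicit Defensive.

(* A bounded cell with at most four bounding segments is an open axis-parallel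
   rectangle: from a point of the cell at a generic height, horizontal and
   vertical rays leave the cell through segments perpendicular to them, which
   yields two vertical and two horizontal bounding segments, hence all of them.
   Among three segments two are parallel, say horizontal.  Every bounded cell
   bounded by the three is then a rectangle over the strip between these two,
   with the third segment as a vertical side; two such cells on the same side
   of it would overlap, so they lie on opposite sides of it.  A third cell
   would overlap one of them if it were bounded; if it is the unbounded cell,
   horizontal rays coming from far away towards the two rectangles meet two
   more vertical bounding segments of it, five in all.  Since only one cell is
   unbounded, two of any three cells are bounded. *)

Lemma finite_subset1 T (A : set T) : is_subset1 A -> finite_set A.
Proof.
move=> A1; have [->|/set0P[x Ax]] := eqVneq A set0; first exact: finite_set0.
suff -> : A = [set x] by exact: finite_set1.
by apply/seteqP; split=> y /=; [move/A1; apply|move->].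
Qed.

Lemma card_le2_of_no_three T (A : set T) :
  (forall a b c, A a -> A b -> A c -> a <> b -> a <> c -> b <> c -> False) ->
  (A #<= `I_2)%card.
Proof.
move=> no3; apply/pcard_leP/injfunPex.
have [->|/set0P[a Aa]] := eqVneq A set0.
  by exists (fun=> 0%N) => // x /[!inE].
exists (fun x => if `[< x = a >] then 0%N else 1%N) => [x _|x y /[!inE] Ax Ay].
  by case: ifP.
case: (boolP `[< x = a >]) => /asboolP xa; case: (boolP `[< y = a >]) => /asboolP ya //=.
- by rewrite xa ya.
- by move=> _; apply: contrapT => nxy; apply: (no3 a x y) => // /esym.
Qed.

Lemma card_le4_no_five T (A : set T) a b c d e : (A #<= `I_4)%card ->
  A a -> A b -> A c -> A d -> A e ->
  a <> b -> a <> c -> a <> d -> a <> e -> b <> c -> b <> d -> b <> e ->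
  c <> d -> c <> e -> d <> e -> False.
Proof.
move=> /pcard_leP/injfunPex[f fA finj] Aa Ab Ac Ad Ae.
have fne x y : A x -> A y -> x <> y -> f x <> f y.
  by move=> Ax Ay nxy /finj; rewrite !inE => /(_ Ax Ay).
move=> /(fne _ _ Aa Ab) + /(fne _ _ Aa Ac) + /(fne _ _ Aa Ad) + /(fne _ _ Aa Ae) +
  /(fne _ _ Ab Ac) + /(fne _ _ Ab Ad) + /(fne _ _ Ab Ae) + /(fne _ _ Ac Ad) +
  /(fne _ _ Ac Ae) + /(fne _ _ Ad Ae).
move: (fA a Aa) (fA b Ab) (fA c Ac) (fA d Ad) (fA e Ae) => /=.
move: (f a) (f b) (f c) (f d) (f e).
by do 5 case=> [|[|[|[|?]]]] //.
Qed.

Lemma finite_set_avoid (R : realType) (F : set R) (u v : R) :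
  finite_set F -> u < v -> exists2 x, u < x < v & ~ F x.
Proof.
move=> finF uv; apply: contrapT => hF.
have : finite_set `]u, v[.
  apply: sub_finite_set finF => x; rewrite /= in_itv /= => xuv.
  by apply: contrapT => nFx; apply: hF; exists x.
apply/infiniteP/pcard_leP/injfunPex.
have vu : 0 < v - u by rewrite subr_gt0.
exists (fun n : nat => u + (v - u) / (n%:R + 2)).
- move=> n _; rewrite /= in_itv /=.
  have n2 : 0 < n%:R + 2 :> R by have := ler0n R n; lra.
  apply/andP; split; first by rewrite ltrDl divr_gt0.
  by rewrite -ltrBrDl ltr_pdivrMr // ltr_pMr //; have := ler0n R n; lra.
- move=> m n _ _ /= /addrI.
  move/(mulfI (lt0r_neq0 vu))/invr_inj/addIr/eqP; rewrite eqr_nat => /eqP //.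
Qed.

Section Frame.
Variable R : realType.
Implicit Types (b : bool) (x y s t : R) (z : R * R).

(* In the frame [b = true] the two axes are exchanged, so that every argument
   about horizontal lines is made once and applies to vertical lines too. *)
Definition frame_pt b x y : R * R := if b then (y, x) else (x, y).
Definition xco b z : R := if b then z.2 else z.1.
Definition yco b z : R := if b then z.1 else z.2.

Lemma xco_frame b x y : xco b (frame_pt b x y) = x. Proof. by case: b. Qed.
Lemma yco_frame b x y : yco b (frame_pt b x y) = y. Proof. by case: b. Qed.
Lemma frame_ptK b z : frame_pt b (xco b z) (yco b z) = z.
Proof. by case: b; case: z. Qed.
Lemma xcoN b z : xco (~~ b) z = yco b z. Proof. by case: b. Qed.
Lemma ycoN b z : yco (~~ b) z = xco b z. Proof. by case: b. Qed.
Lemma frame_ptN b x y : frame_pt (~~ b) x y = frame_pt b y x. Proof. by case: b. Qed.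

Lemma ball_frame b x y x' y' e :
  ball (frame_pt b x y) e (frame_pt b x' y') <-> `|x - x'| < e /\ `|y - y'| < e.
Proof.
have ballE (z w : R * R) : ball z e w <-> `|z.1 - w.1| < e /\ `|z.2 - w.2| < e.
  by rewrite /ball /= /ball /=.
by rewrite ballE; case: b => /=; tauto.
Qed.

Definition hshift b s z t := frame_pt b (xco b z + s * t) (yco b z).

Lemma hshift0 b s z : hshift b s z 0 = z.
Proof. by rewrite /hshift mulr0 addr0 frame_ptK. Qed.
Lemma xco_hshift b s z t : xco b (hshift b s z t) = xco b z + s * t.
Proof. exact: xco_frame. Qed.
Lemma yco_hshift b s z t : yco b (hshift b s z t) = yco b z.
Proof. exact: yco_frame. Qed.

Lemma hshift_to b x z : hshift b (x - xco b z) z 1 = frame_pt b x (yco b z).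
Proof. by rewrite /hshift mulr1 addrC subrK. Qed.

Lemma hshift_to_right b x z : hshift b 1 z (x - xco b z) = frame_pt b x (yco b z).
Proof. by rewrite /hshift mul1r addrC subrK. Qed.

Lemma hshift_to_left b x z : hshift b (-1) z (xco b z - x) = frame_pt b x (yco b z).
Proof. by rewrite /hshift mulN1r opprB addrC subrK. Qed.

Lemma continuous_hshift b s z : continuous (hshift b s z).
Proof.
move=> t; have lin : (fun t => xco b z + s * t) @ t --> xco b z + s * t.
  by apply: cvgD; [exact: cvg_cst | apply: cvgM; [exact: cvg_cst | exact: cvg_id]].
case: b lin => /= lin; [exact: (cvg_pair (cvg_cst _) lin) | exact: (cvg_pair lin (cvg_cst _))].
Qed.

Lemma connected_hshift_itv b s z t : connected (hshift b s z @` `[0, t]).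
Proof.
apply: connected_continuous_connected; first exact: segment_connected.
by apply: continuous_subspaceT => u; exact: continuous_hshift.
Qed.

Lemma ball_hshift b s z e t t' : `|t - t'| < e / (`|s| + 1) ->
  ball (hshift b s z t) e (hshift b s z t').
Proof.
have s1 : 0 < `|s| + 1 by have := normr_ge0 s; lra.
rewrite ltr_pdivlMr // => tt'; rewrite ball_frame subrr normr0.
have -> : xco b z + s * t - (xco b z + s * t') = s * (t - t') by ring.
rewrite normrM; have := normr_ge0 s; have := normr_ge0 (t - t'); split; nra.
Qed.

Definition on_hline b y (l : set (R * R)) := l `<=` [set z | yco b z = y].
Definition on_vline b x (l : set (R * R)) := l `<=` [set z | xco b z = x].

Lemma on_hlineN b y l : on_hline (~~ b) y l <-> on_vline b y l.
Proof. by split=> H z /H /=; rewrite ycoN. Qed.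
Lemma on_vlineN b x l : on_vline (~~ b) x l <-> on_hline b x l.
Proof. by split=> H z /H /=; rewrite xcoN. Qed.

Lemma on_vline_hline_subset1 b x y l :
  on_vline b x l -> on_hline b y l -> is_subset1 l.
Proof.
move=> Hx Hy z w lz lw.
by rewrite -(frame_ptK b z) -(frame_ptK b w) (Hx z) ?(Hy z) ?(Hx w) ?(Hy w).
Qed.

Lemma on_vline_eq b x x' l : l !=set0 -> on_vline b x l -> on_vline b x' l -> x = x'.
Proof. by move=> [z lz] lx lx'; rewrite -(lx z lz) (lx' z lz). Qed.

Lemma on_vline_neq b x x' l l' :
  l !=set0 -> on_vline b x l -> on_vline b x' l' -> x < x' -> l <> l'.
Proof.
by move=> l0 lx l'x' + E; rewrite -E in l'x'; rewrite (on_vline_eq l0 lx l'x') ltxx.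
Qed.

Lemma compact_seg_pts (p q : R * R) : compact (seg_pts p q).
Proof.
pose f t : R * R := ((1 - t) * p.1 + t * q.1, (1 - t) * p.2 + t * q.2).
have -> : seg_pts p q = f @` `[0, 1].
  apply/seteqP; split=> z [t t01].
  - by move=> ->; exists t; rewrite //= in_itv.
  - by move=> <-; exists t; rewrite // in_itv in t01.
apply: continuous_compact; last exact: segment_compact.
apply: continuous_subspaceT => t.
have bary (u v : R) : (fun t => (1 - t) * u + t * v) @ t --> (1 - t) * u + t * v.
  apply: cvgD; apply: cvgM; try exact: cvg_cst; try exact: cvg_id.
  by apply: cvgB; [exact: cvg_cst | exact: cvg_id].
exact: (cvg_pair (bary _ _) (bary _ _)).
Qed.

Lemma axis_segment_on_line b l : axis_segment l ->
  (exists x, on_vline b x l) \/ (exists y, on_hline b y l).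
Proof.
move=> [p [q [pq ->]]].
have on1 : p.1 = q.1 -> seg_pts p q `<=` [set z | z.1 = p.1].
  by move=> e z [t _ ->] /=; rewrite -e; ring.
have on2 : p.2 = q.2 -> seg_pts p q `<=` [set z | z.2 = p.2].
  by move=> e z [t _ ->] /=; rewrite -e; ring.
case: pq => e; case: b.
- by right; exists p.1 => z /(on1 e).
- by left; exists p.1 => z /(on1 e).
- by left; exists p.2 => z /(on2 e).
- by right; exists p.2 => z /(on2 e).
Qed.

End Frame.

Section Arrangement.
Variables (R : realType) (L : set (set (R * R))).
Hypotheses (finL : finite_set L) (axL : forall l, L l -> axis_segment l).
Implicit Types (C : set (R * R)) (l : set (R * R)) (b : bool) (z w : R * R).

Let U := \bigcup_(l in L) l.

Lemma compact_segments : compact U.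
Proof.
rewrite /U -(bigsetU_fset_set _ finL) big_seq.
apply: bigsetU_compact => l; rewrite in_fset_set // inE => /axL[p [q [_ ->]]].
exact: compact_seg_pts.
Qed.

Lemma closed_segments : closed U.
Proof. by apply: compact_closed compact_segments; exact: norm_hausdorff. Qed.

Lemma open_arr_complement : open (arr_complement L).
Proof. by rewrite openC; exact: closed_segments. Qed.

Lemma segments_bounded :
  exists2 M : R, 0 < M & forall z, U z -> `|z.1| < M /\ `|z.2| < M.
Proof.
have /pinfty_ex_gt0[M M0 UM] := compact_bounded compact_segments.
exists (M + 1) => [|z /UM zM]; first lra.
have : Num.max `|z.1| `|z.2| <= M.
  by apply: le_trans zM; rewrite (@prod_normE R R^o R^o z).
by rewrite ge_max => /andP[z1 z2]; split; lra.
Qed.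

Lemma cell_sub_complement C : is_cell L C -> C `<=` arr_complement L.
Proof. by move=> [x [_ ->]]; exact: connected_component_sub. Qed.

Lemma cell_N0 C : is_cell L C -> C !=set0.
Proof. by move=> [x [Ox ->]]; exists x; exact: connected_component_refl. Qed.

Lemma connected_sub_cell C K z : is_cell L C -> connected K ->
  K `<=` arr_complement L -> K z -> C z -> K `<=` C.
Proof.
move=> [x [_ ->]] cK KO Kz Cz.
by rewrite (same_connected_component Cz); exact: connected_component_max.
Qed.

Lemma cell_eq C C' z : is_cell L C -> is_cell L C' -> C z -> C' z -> C = C'.
Proof.
move=> [x [_ ->]] [x' [_ ->]] Cz C'z.
by rewrite (same_connected_component Cz) (same_connected_component C'z).
Qed.

Lemma hshift_in_cell C b s z t : is_cell L C -> C z -> 0 <= t ->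
  (forall u, 0 <= u <= t -> ~ U (hshift b s z u)) -> C (hshift b s z t).
Proof.
move=> cC Cz t0 free.
have sub : hshift b s z @` `[0, t] `<=` C.
  apply: (connected_sub_cell cC (@connected_hshift_itv _ b s z t) _ _ Cz).
  - by move=> w [u + <-]; rewrite /= in_itv /=; exact: free.
  - by exists 0; [rewrite /= in_itv /= lexx t0 | exact: hshift0].
by apply: sub; exists t => //; rewrite /= in_itv /= lexx t0.
Qed.

Lemma cell_square C z : is_cell L C -> C z -> exists2 e : R, 0 < e &
  forall b x y, `|xco b z - x| < e -> `|yco b z - y| < e -> C (frame_pt b x y).
Proof.
move=> cC Cz; have /nbhs_ballP[e e0 ballO] : nbhs z (arr_complement L).
  by apply: open_arr_complement; exact: cell_sub_complement Cz.
exists e => // b x y zx zy.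
have nearO u v : `|xco b z - u| < e -> `|yco b z - v| < e -> ~ U (frame_pt b u v).
  by move=> zu zv; apply: ballO; rewrite -(frame_ptK b z) ball_frame.
have along (a c u : R) : 0 <= u <= 1 -> `|a - (a + (c - a) * u)| <= `|a - c|.
  move=> /andP[u0 u1]; rewrite opprD addrA subrr add0r normrN normrM (ger0_norm u0).
  by rewrite distrC ler_piMr.
pose p := frame_pt b x (yco b z).
have Cp : C p.
  rewrite /p -hshift_to; apply: hshift_in_cell => // u u01; apply: nearO.
  - exact: le_lt_trans (along _ _ _ u01) zx.
  - by rewrite subrr normr0.
(* then vertically, i.e. horizontally in the frame [~~ b] *)
have -> : frame_pt b x y = frame_pt (~~ b) y (yco (~~ b) p).
  by rewrite frame_ptN ycoN xco_frame.
rewrite -hshift_to; apply: hshift_in_cell => // u u01.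
rewrite /hshift frame_ptN !xcoN ycoN yco_frame xco_frame; apply: nearO => //.
exact: le_lt_trans (along _ _ _ u01) zy.
Qed.

Lemma hshift_boundary C b s z t0 : is_cell L C -> 0 < t0 ->
  U (hshift b s z t0) -> (forall t, 0 <= t < t0 -> C (hshift b s z t)) ->
  boundary C (hshift b s z t0).
Proof.
move=> cC t0p Ut0 before; split; last first.
  by move=> /interior_subset /(cell_sub_complement cC).
move=> B /nbhs_ballP[e e0 eB].
have s1 : 0 < `|s| + 1 by have := normr_ge0 s; lra.
pose d := Num.min (t0 / 2) (e / (`|s| + 1) / 2).
have d1 : d <= t0 / 2 by rewrite /d ge_min lexx.
have d2 : d <= e / (`|s| + 1) / 2 by rewrite /d ge_min lexx orbT.
have d0 : 0 < d by rewrite /d lt_min !divr_gt0.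
exists (hshift b s z (t0 - d)); split; first by apply: before; lra.
apply: eB; apply: ball_hshift; rewrite opprB addrC subrK gtr0_norm //.
by have := divr_gt0 e0 s1; lra.
Qed.

Lemma hshift_first_hit C b s z t1 : is_cell L C -> C z -> 0 <= t1 ->
  U (hshift b s z t1) ->
  exists t0, [/\ 0 < t0, t0 <= t1, U (hshift b s z t0),
    boundary C (hshift b s z t0) & forall t, 0 <= t < t0 -> C (hshift b s z t)].
Proof.
move=> cC Cz t10 Ut1.
pose K := [set t | 0 <= t <= t1 /\ U (hshift b s z t)].
have Kt1 : K t1 by split; rewrite // t10 lexx.
have hinfK : has_inf K by split; [exists t1 | exists 0 => t [/andP[]]].
pose t0 := inf K.
have t0le t : K t -> t0 <= t by move=> Kt; exact: ge_inf (proj2 hinfK) _ Kt.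
have t0ge0 : 0 <= t0 by apply: lb_le_inf; [exists t1 | move=> t [/andP[]]].
have t0le1 : t0 <= t1 by exact: t0le.
have s1 : 0 < `|s| + 1 by have := normr_ge0 s; lra.
have Ut0 : U (hshift b s z t0).
  apply: closed_segments => B /nbhs_ballP[e e0 eB].
  have [t Kt tt0] := inf_adherent (divr_gt0 e0 s1) hinfK.
  exists (hshift b s z t); split; first by case: Kt.
  apply: eB; apply: ball_hshift; have tt := t0le t Kt; rewrite -/t0 in tt0.
  by rewrite distrC ger0_norm ?subr_ge0 //; lra.
have t0pos : 0 < t0.
  rewrite lt_neqAle t0ge0 andbT; apply/eqP => t00.
  by apply: (cell_sub_complement cC Cz); rewrite -(hshift0 b s z) t00.
have before t : 0 <= t < t0 -> C (hshift b s z t).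
  move=> /andP[t0' tt0]; apply: hshift_in_cell => // u /andP[u0 ut] Uu.
  suff : t0 <= u by lra.
  by apply: t0le; split => //; rewrite u0 /=; lra.
by exists t0; split => //; exact: hshift_boundary.
Qed.

Lemma hshift_exit C b s z t1 : is_cell L C -> C z -> 0 <= t1 ->
  ~ C (hshift b s z t1) ->
  exists t0, [/\ 0 < t0, t0 <= t1, U (hshift b s z t0),
    boundary C (hshift b s z t0) & forall t, 0 <= t < t0 -> C (hshift b s z t)].
Proof.
move=> cC Cz t10 nCt1.
have [t' /andP[t'0 t't1] Ut'] : exists2 t', 0 <= t' <= t1 & U (hshift b s z t').
  apply: contrapT => free; apply: nCt1; apply: hshift_in_cell => // t tt1 Ut.
  by apply: free; exists t.
have [t0 [? ? ? ? ?]] := hshift_first_hit cC Cz t'0 Ut'.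
by exists t0; split => //; lra.
Qed.

Lemma assoc_N0 C l : assoc_subset L C l -> l !=set0.
Proof. by move=> [_ [x [_ [_ [lx _]]]]]; exists x. Qed.

Lemma assoc_not_subset1 C l : assoc_subset L C l -> ~ is_subset1 l.
Proof. by move=> [_ [x [y [xy [lx [ly _]]]]]] l1; apply/xy/l1. Qed.

Lemma assoc_vline_hline_neq C b x y l l' :
  assoc_subset L C l -> on_vline b x l -> on_hline b y l' -> l <> l'.
Proof.
move=> Al lx l'y E; apply: (assoc_not_subset1 Al).
by apply: (on_vline_hline_subset1 (y := y) lx); rewrite E.
Qed.

Definition bounded_by C p q r :=
  [/\ assoc_subset L C p, assoc_subset L C q & assoc_subset L C r].

(* Away from these heights a horizontal line of frame [b] leaves [C] only
   through vertical bounding segments ([exit_on_vline]).  They are finitely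
   many: a segment not forming part of the boundary meets it at most once. *)
Definition exceptional b C : set R := [set y | exists2 l, L l &
  (~ assoc_subset L C l /\ exists2 w, l w & boundary C w /\ y = yco b w) \/
  (assoc_subset L C l /\ on_hline b y l)].

Lemma finite_exceptional b C : finite_set (exceptional b C).
Proof.
pose E l := [set y | (~ assoc_subset L C l /\ exists2 w, l w & boundary C w /\ y = yco b w)
  \/ (assoc_subset L C l /\ on_hline b y l)].
apply: (@sub_finite_set _ _ (\bigcup_(l in L) E l)); first by move=> y [l Ll Ey]; exists l.
apply: bigcup_finite => // l Ll; apply: finite_subset1 => y y'.
case=> [[nAl [w lw [bw ->]]]|[Al ly]]; case=> [[_ [w' lw' [bw' ->]]]|[_ ly']] //.
- have [->//|ww'] := pselect (w = w').
  by exfalso; apply: nAl; split => //; exists w, w'.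
- by have [x lx] := assoc_N0 Al; rewrite -(ly x lx) -(ly' x lx).
Qed.

Lemma exit_on_vline b C w l : boundary C w -> L l -> l w ->
  ~ exceptional b C (yco b w) -> assoc_subset L C l /\ on_vline b (xco b w) l.
Proof.
move=> bw Ll lw nE.
have Al : assoc_subset L C l.
  by apply: contrapT => nAl; apply: nE; exists l => //; left; split => //; exists w.
split => //; case: (axis_segment_on_line b (axL Ll)) => [[x lx]|[y ly]].
  by move=> z lz /=; rewrite (lx z lz) (lx w lw).
by exfalso; apply: nE; exists l => //; right; split => // z lz /=; rewrite (ly z lz) (ly w lw).
Qed.

Lemma hshift_exit_vline C b s z t1 : is_cell L C -> C z ->
  ~ exceptional b C (yco b z) -> 0 <= t1 -> ~ C (hshift b s z t1) ->
  exists t0 l, [/\ 0 < t0 <= t1, assoc_subset L C l,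
    on_vline b (xco b z + s * t0) l & forall t, 0 <= t < t0 -> C (hshift b s z t)].
Proof.
move=> cC Cz nE t10 nC.
have [t0 [t0p t0t1 [l Ll lt0] bt0 before]] := hshift_exit cC Cz t10 nC.
have nE0 : ~ exceptional b C (yco b (hshift b s z t0)) by rewrite yco_hshift.
have [Al lx] := exit_on_vline bt0 Ll lt0 nE0.
exists t0, l; split => //; first by rewrite t0p.
by move=> w lw; rewrite /= (lx w lw) xco_hshift.
Qed.

Lemma cell_generic_pt C b : is_cell L C -> exists w,
  [/\ C w, ~ exceptional (~~ b) C (xco b w) & ~ exceptional b C (yco b w)].
Proof.
move=> cC; have [z Cz] := cell_N0 cC; have [e e0 sqC] := cell_square cC Cz.
have ltpm a : a - e < a + e by lra.
have [x /andP[x1 x2] nEx] := finite_set_avoid (finite_exceptional (~~ b) C) (ltpm (xco b z)).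
have [y /andP[y1 y2] nEy] := finite_set_avoid (finite_exceptional b C) (ltpm (yco b z)).
exists (frame_pt b x y); rewrite xco_frame yco_frame; split => //.
by apply: sqC; rewrite ltr_distl; apply/andP; split; lra.
Qed.

Record boxed b C (x1 x2 y1 y2 : R) (left right bot top : set (R * R)) : Prop := Boxed {
  boxed_ltx : x1 < x2;
  boxed_lty : y1 < y2;
  boxed_left : on_vline b x1 left;
  boxed_right : on_vline b x2 right;
  boxed_bot : on_hline b y1 bot;
  boxed_top : on_hline b y2 top;
  boxed_assoc : forall l, assoc_subset L C l ->
    l = left \/ l = right \/ l = bot \/ l = top }.

Section Boxed.
Variables (b : bool) (C : set (R * R)) (x1 x2 y1 y2 : R).
Variables (left right bot top : set (R * R)).
Hypothesis bx : boxed b C x1 x2 y1 y2 left right bot top.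

Lemma boxedN : boxed (~~ b) C y1 y2 x1 x2 bot top left right.
Proof.
case: bx => ltx lty le ri bo to Aall; split => //; try exact/on_vlineN; try exact/on_hlineN.
by move=> l /Aall; tauto.
Qed.

Lemma boxed_vline l x : assoc_subset L C l -> on_vline b x l ->
  (l = left /\ x = x1) \/ (l = right /\ x = x2).
Proof.
move=> Al lx; have l0 := assoc_N0 Al.
case: (boxed_assoc bx Al) => [El|[El|[El|El]]]; rewrite El in Al lx l0 *.
- by left; split => //; exact: on_vline_eq l0 lx (boxed_left bx).
- by right; split => //; exact: on_vline_eq l0 lx (boxed_right bx).
- by case: (assoc_vline_hline_neq Al lx (boxed_bot bx)).
- by case: (assoc_vline_hline_neq Al lx (boxed_top bx)).
Qed.

End Boxed.

Lemma boxed_hline b C x1 x2 y1 y2 left right bot top l y :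
  boxed b C x1 x2 y1 y2 left right bot top -> assoc_subset L C l -> on_hline b y l ->
  (l = bot /\ y = y1) \/ (l = top /\ y = y2).
Proof. by move=> /boxedN bx Al /on_vlineN ly; exact (boxed_vline bx Al ly). Qed.

Lemma boxed_sides b C x1 x2 y1 y2 left right bot top p q r yp yq :
  boxed b C x1 x2 y1 y2 left right bot top -> bounded_by C p q r ->
  p <> q -> p <> r -> q <> r -> on_hline b yp p -> on_hline b yq q ->
  [/\ y1 = Num.min yp yq, y2 = Num.max yp yq & on_vline b x1 r \/ on_vline b x2 r].
Proof.
move=> bx [Ap Aq Ar] pq pr qr /(boxed_hline bx Ap) hp /(boxed_hline bx Aq) hq.
have y12 := ltW (boxed_lty bx).
have vert : r <> bot -> r <> top -> on_vline b x1 r \/ on_vline b x2 r.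
  move=> rb rt; case: (boxed_assoc bx Ar) => [->|[->|[//|//]]].
  - by left; exact: boxed_left bx.
  - by right; exact: boxed_right bx.
case: hp hq => -[Ep ->] [[Eq ->]|[Eq ->]]; try by case: pq; rewrite Ep Eq.
- by rewrite min_l ?max_r //; split => //; apply: vert; congruence.
- by rewrite min_r ?max_l //; split => //; apply: vert; congruence.
Qed.

Section Far.
Variable M : R.
Hypotheses (M0 : 0 < M) (UM : forall z, U z -> `|z.1| < M /\ `|z.2| < M).

(* [M] bounds the segments, so all [far] points lie in one cell ([cell_far]);
   the other cells, i.e. those avoiding [far_pt], are the bounded ones. *)
Definition far z := exists b, M < `|yco b z|.
Definition far_pt : R * R := (M + 1, M + 1).

Lemma far_not_segment z : far z -> ~ U z.
Proof. by move=> [[] /= Mz] /UM[z1 z2]; lra. Qed.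

Let M_lt_far : M < `|M + 1|.
Proof. by rewrite ger0_norm; have := M0; lra. Qed.

Lemma far_pt_far : far far_pt.
Proof. by exists false; exact: M_lt_far. Qed.

Lemma far_frame_pt b x y : M < `|x| -> far (frame_pt b x y).
Proof. by exists (~~ b); rewrite ycoN xco_frame. Qed.

Lemma cell_far_hline C b z x : is_cell L C -> C z -> M < `|yco b z| ->
  C (frame_pt b x (yco b z)).
Proof.
move=> cC Cz Mz; rewrite -hshift_to; apply: (hshift_in_cell cC Cz ler01) => u _.
by apply: far_not_segment; exists b; rewrite yco_hshift.
Qed.

Lemma cell_far_pt C z : is_cell L C -> C z -> far z -> C far_pt.
Proof.
move=> cC Cz [b Mz].
have := @cell_far_hline C (~~ b) _ (M + 1) cC (cell_far_hline (M + 1) cC Cz Mz).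
by rewrite ycoN xco_frame frame_ptN => /(_ M_lt_far); case: b {Mz}.
Qed.

Lemma cell_far C z w : is_cell L C -> C z -> far z -> far w -> C w.
Proof.
move=> cC Cz fz fw; have Ow := far_not_segment fw.
pose Cw := connected_component (arr_complement L) w.
have cCw : is_cell L Cw by exists w.
have Cww : Cw w by exact: connected_component_refl.
by rewrite (cell_eq cC cCw (cell_far_pt cC Cz fz) (cell_far_pt cCw Cww fw)).
Qed.

Lemma bounded_cell_exit C b s z : is_cell L C -> ~ C far_pt -> C z ->
  ~ exceptional b C (yco b z) -> s != 0 ->
  exists t0 l, [/\ 0 < t0, assoc_subset L C l, on_vline b (xco b z + s * t0) l
    & forall t, 0 <= t < t0 -> C (hshift b s z t)].
Proof.
move=> cC nCf Cz nE s0; have nx := normr_ge0 (xco b z); have hM := M0.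
pose t1 := (M + `|xco b z| + 1) / `|s|.
have t10 : 0 <= t1 by rewrite divr_ge0 //; lra.
have st1 : `|s * t1| = M + `|xco b z| + 1.
  by rewrite normrM (ger0_norm t10) mulrC divfK // normr_eq0.
have far1 : far (hshift b s z t1).
  exists (~~ b); rewrite ycoN xco_hshift.
  have := ler_normD (xco b z + s * t1) (- xco b z).
  by rewrite addrAC subrr add0r normrN st1; lra.
have nC1 : ~ C (hshift b s z t1) by move=> C1; exact/nCf/(cell_far cC C1 far1 far_pt_far).
have [t0 [l [/andP[t0p _] Al lx before]]] := hshift_exit_vline cC Cz nE t10 nC1.
by exists t0, l.
Qed.

Lemma boxed_hline_in_cell C b x1 x2 y1 y2 left right bot top w :
  is_cell L C -> ~ C far_pt -> boxed b C x1 x2 y1 y2 left right bot top ->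
  C w -> ~ exceptional b C (yco b w) ->
  x1 < xco b w < x2 /\ forall x, x1 < x < x2 -> C (frame_pt b x (yco b w)).
Proof.
move=> cC nCf bx Cw nE; have ltx := boxed_ltx bx.
have n1 : -1 != 0 :> R by rewrite oppr_eq0 oner_eq0.
have [t1 [l1 [t1p A1 l1x right_in]]] := bounded_cell_exit cC nCf Cw nE (oner_neq0 R).
have [t2 [l2 [t2p A2 l2x left_in]]] := bounded_cell_exit cC nCf Cw nE n1.
have [xr xl] : xco b w + 1 * t1 = x2 /\ xco b w + -1 * t2 = x1.
  case: (boxed_vline bx A1 l1x) => -[_ e1]; case: (boxed_vline bx A2 l2x) => -[_ e2];
  split; lra.
split=> [|x /andP[x1x xx2]]; first by apply/andP; split; lra.
have [wx|xw] := leP (xco b w) x.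
- by rewrite -hshift_to_right; apply: right_in; apply/andP; split; lra.
- by rewrite -hshift_to_left; apply: left_in; apply/andP; split; lra.
Qed.

Lemma boxed_vfibre C b x1 x2 y1 y2 left right bot top u v :
  is_cell L C -> ~ C far_pt -> boxed b C x1 x2 y1 y2 left right bot top ->
  x1 <= u -> u < v -> v <= x2 ->
  exists2 x, u < x < v & forall y, y1 < y < y2 -> C (frame_pt b x y).
Proof.
move=> cC nCf bx x1u uv vx2; have [z [Cz _ nEy]] := cell_generic_pt b cC.
have [_ hline] := boxed_hline_in_cell cC nCf bx Cz nEy.
have [x /andP[ux xv] nEx] := finite_set_avoid (finite_exceptional (~~ b) C) uv.
exists x; first by rewrite ux xv.
have Cw : C (frame_pt b x (yco b z)) by apply: hline; apply/andP; split; lra.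
have nEw : ~ exceptional (~~ b) C (yco (~~ b) (frame_pt b x (yco b z))).
  by rewrite ycoN xco_frame.
have [_ vline] := boxed_hline_in_cell cC nCf (boxedN bx) Cw nEw.
by move=> y /vline; rewrite ycoN xco_frame frame_ptN.
Qed.

Lemma boxed_of_card_le4 C b : is_cell L C -> ~ C far_pt ->
  (assoc_subset L C #<= `I_4)%card ->
  exists x1 x2 y1 y2 left right bot top, boxed b C x1 x2 y1 y2 left right bot top.
Proof.
move=> cC nCf C4; have [z [Cz nEx nEy]] := cell_generic_pt b cC.
have n1 : -1 != 0 :> R by rewrite oppr_eq0 oner_eq0.
have [t1 [r [t1p Ar rx _]]] := bounded_cell_exit cC nCf Cz nEy (oner_neq0 R).
have [t2 [l [t2p Al lx _]]] := bounded_cell_exit cC nCf Cz nEy n1.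
rewrite -ycoN in nEx.
have [t3 [t [t3p At /on_vlineN ty _]]] := bounded_cell_exit cC nCf Cz nEx (oner_neq0 R).
have [t4 [d [t4p Ad /on_vlineN dy _]]] := bounded_cell_exit cC nCf Cz nEx n1.
rewrite xcoN in ty dy.
exists (xco b z + -1 * t2), (xco b z + 1 * t1), (yco b z + -1 * t4), (yco b z + 1 * t3).
exists l, r, d, t; split => //; try lra.
have lr : l <> r by apply: (on_vline_neq (assoc_N0 Al) lx rx); lra.
have dt : d <> t.
  apply: (on_vline_neq (assoc_N0 Ad) (iffRL (on_vlineN _ _ _) dy)).
    exact: (iffRL (on_vlineN _ _ _) ty).
  lra.
move=> s As; apply: contrapT => ns.
apply: (card_le4_no_five C4 As Al Ar Ad At); try by move=> E; apply: ns; rewrite E; tauto.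
- exact: assoc_vline_hline_neq Al lx dy.
- exact: assoc_vline_hline_neq Al lx ty.
- exact: assoc_vline_hline_neq Ar rx dy.
- exact: assoc_vline_hline_neq Ar rx ty.
Qed.

Lemma boxed_cells_eq C C' b x1 x2 x1' x2' y1 y2 left right bot top
    left' right' bot' top' :
  is_cell L C -> is_cell L C' -> ~ C far_pt -> ~ C' far_pt ->
  boxed b C x1 x2 y1 y2 left right bot top ->
  boxed b C' x1' x2' y1 y2 left' right' bot' top' ->
  x1 < x2' -> x1' < x2 -> C = C'.
Proof.
move=> cC cC' nCf nC'f bx bx' lt12' lt1'2.
have ltx := boxed_ltx bx; have ltx' := boxed_ltx bx'.
have u1 : x1 <= Num.max x1 x1' by rewrite le_max lexx.
have u1' : x1' <= Num.max x1 x1' by rewrite le_max lexx orbT.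
have v2 : Num.min x2 x2' <= x2 by rewrite ge_min lexx.
have v2' : Num.min x2 x2' <= x2' by rewrite ge_min lexx orbT.
have uv : Num.max x1 x1' < Num.min x2 x2' by rewrite gt_max !lt_min ltx ltx' lt12' lt1'2.
have [x /andP[ux xv] Cx] := boxed_vfibre cC nCf bx u1 uv v2.
have [y y12 C'y] := boxed_vfibre cC' nC'f (boxedN bx') (lexx y1) (boxed_lty bx) (lexx y2).
apply: (cell_eq cC cC' (Cx y y12)); rewrite -frame_ptN; apply: C'y.
by apply/andP; split; lra.
Qed.

(* Horizontal rays from far left and far right at a generic height leave [C]
   through vertical bounding segments left of [xl] and right of [xr]: with
   [p], [q] and [r] these are five. *)
Lemma far_cell_not_between C b p q r x0 xl xr y1 y2 yp yq :
  is_cell L C -> C far_pt -> (assoc_subset L C #<= `I_4)%card -> bounded_by C p q r ->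
  p <> q -> on_hline b yp p -> on_hline b yq q -> on_vline b x0 r ->
  xl < x0 < xr -> y1 < y2 ->
  (forall y, y1 < y < y2 -> ~ C (frame_pt b xl y) /\ ~ C (frame_pt b xr y)) -> False.
Proof.
move=> cC Cf C4 [Ap Aq Ar] pq pyp qyq rx /andP[xl0 x0r] y12 sep.
have [y y_in nEy] := finite_set_avoid (finite_exceptional b C) y12.
have [nCl nCr] := sep y y_in.
pose N := M + `|xl| + `|xr| + 1.
have hM := M0; have nxl := normr_ge0 xl; have nxr := normr_ge0 xr.
have lxl := ler_norm xl; have lxr := ler_norm xr.
have lxl' : - xl <= `|xl| by rewrite -normrN ler_norm.
have lxr' : - xr <= `|xr| by rewrite -normrN ler_norm.
have CN x : M < `|x| -> C (frame_pt b x y).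
  by move=> Mx; exact: cell_far cC Cf far_pt_far (far_frame_pt _ _ Mx).
have CL : C (frame_pt b (- N) y) by apply: CN; rewrite normrN ger0_norm /N; lra.
have CR : C (frame_pt b N y) by apply: CN; rewrite ger0_norm /N; lra.
have nE x : ~ exceptional b C (yco b (frame_pt b x y)) by rewrite yco_frame.
have nCL : ~ C (hshift b 1 (frame_pt b (- N) y) (xl + N)).
  by rewrite /hshift xco_frame yco_frame mul1r addrC addrK.
have nCR : ~ C (hshift b (-1) (frame_pt b N y) (N - xr)).
  by rewrite /hshift xco_frame yco_frame mulN1r opprB addrC subrK.
have tL0 : 0 <= xl + N by rewrite /N; lra.
have tR0 : 0 <= N - xr by rewrite /N; lra.
have [tL [sL [/andP[_ tLle] AL + _]]] := hshift_exit_vline cC CL (nE _) tL0 nCL.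
have [tR [sR [/andP[_ tRle] AR + _]]] := hshift_exit_vline cC CR (nE _) tR0 nCR.
rewrite !xco_frame => Rx Lx.
apply: (card_le4_no_five C4 Ap Aq Ar AL AR) => //.
- exact/nesym/(assoc_vline_hline_neq Ar rx pyp).
- exact/nesym/(assoc_vline_hline_neq AL Lx pyp).
- exact/nesym/(assoc_vline_hline_neq AR Rx pyp).
- exact/nesym/(assoc_vline_hline_neq Ar rx qyq).
- exact/nesym/(assoc_vline_hline_neq AL Lx qyq).
- exact/nesym/(assoc_vline_hline_neq AR Rx qyq).
- by apply/nesym/(on_vline_neq (assoc_N0 AL) Lx rx); lra.
- by apply: (on_vline_neq (assoc_N0 Ar) rx Rx); lra.
- by apply: (on_vline_neq (assoc_N0 AL) Lx Rx); lra.
Qed.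

Lemma no_third_cell C1 C2 C3 b x1 x0 x2 y1 y2 l1 r1 d1 t1 l2 r2 d2 t2 p q r yp yq :
  is_cell L C1 -> is_cell L C2 -> is_cell L C3 -> ~ C1 far_pt -> ~ C2 far_pt ->
  (assoc_subset L C3 #<= `I_4)%card -> C3 <> C1 -> C3 <> C2 ->
  boxed b C1 x1 x0 y1 y2 l1 r1 d1 t1 -> boxed b C2 x0 x2 y1 y2 l2 r2 d2 t2 ->
  bounded_by C3 p q r -> p <> q -> p <> r -> q <> r ->
  on_hline b yp p -> on_hline b yq q -> y1 = Num.min yp yq -> y2 = Num.max yp yq ->
  on_vline b x0 r -> False.
Proof.
move=> cC1 cC2 cC3 nC1f nC2f C3_4 n31 n32 bx1 bx2 B3 pq pr qr pyp qyq Ey1 Ey2 rx0.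
have [C3f|nC3f] := pselect (C3 far_pt).
  have [xl xl_in C1xl] := boxed_vfibre cC1 nC1f bx1 (lexx x1) (boxed_ltx bx1) (lexx x0).
  have [xr xr_in C2xr] := boxed_vfibre cC2 nC2f bx2 (lexx x0) (boxed_ltx bx2) (lexx x2).
  have xl0r : xl < x0 < xr by move: xl_in xr_in => /andP[_ ->] /andP[-> _].
  apply: (far_cell_not_between cC3 C3f C3_4 B3 pq pyp qyq rx0 xl0r (boxed_lty bx1)).
  move=> y y_in; split => C3y.
  - by apply: n31; exact: cell_eq cC3 cC1 C3y (C1xl y y_in).
  - by apply: n32; exact: cell_eq cC3 cC2 C3y (C2xr y y_in).
have [x1' [x2' [y1' [y2' [l3 [r3 [d3 [t3 bx3]]]]]]]] := boxed_of_card_le4 b cC3 nC3f C3_4.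
have [Ey1' Ey2' r_side] := boxed_sides bx3 B3 pq pr qr pyp qyq.
subst y1 y2 y1' y2'; have r0 : r !=set0 by case: B3 => _ _ /assoc_N0.
have lt1 := boxed_ltx bx1; have lt2 := boxed_ltx bx2; have lt3 := boxed_ltx bx3.
case: r_side => /(on_vline_eq r0 rx0) E; [subst x1' | subst x2'].
- by apply: n32; apply: (boxed_cells_eq cC3 cC2 nC3f nC2f bx3 bx2).
- by apply: n31; apply: (boxed_cells_eq cC3 cC1 nC3f nC1f bx3 bx1).
Qed.

Lemma no_three_cells_parallel C1 C2 C3 b p q r yp yq :
  is_cell L C1 -> is_cell L C2 -> is_cell L C3 -> ~ C1 far_pt -> ~ C2 far_pt ->
  (assoc_subset L C1 #<= `I_4)%card -> (assoc_subset L C2 #<= `I_4)%card ->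
  (assoc_subset L C3 #<= `I_4)%card -> C1 <> C2 -> C1 <> C3 -> C2 <> C3 ->
  bounded_by C1 p q r -> bounded_by C2 p q r -> bounded_by C3 p q r ->
  p <> q -> p <> r -> q <> r -> on_hline b yp p -> on_hline b yq q -> False.
Proof.
move=> cC1 cC2 cC3 nC1f nC2f C1_4 C2_4 C3_4 n12 n13 n23 B1 B2 B3 pq pr qr pyp qyq.
have [x1 [x2 [y1 [y2 [l1 [r1 [d1 [t1 bx1]]]]]]]] := boxed_of_card_le4 b cC1 nC1f C1_4.
have [x1' [x2' [y1' [y2' [l2 [r2 [d2 [t2 bx2]]]]]]]] := boxed_of_card_le4 b cC2 nC2f C2_4.
have [Ey1 Ey2 r_side1] := boxed_sides bx1 B1 pq pr qr pyp qyq.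
have [Ey1' Ey2' r_side2] := boxed_sides bx2 B2 pq pr qr pyp qyq.
subst y1 y2 y1' y2'; have r0 : r !=set0 by case: B1 => _ _ /assoc_N0.
have lt1 := boxed_ltx bx1; have lt2 := boxed_ltx bx2.
case: r_side1 => rx; case: r_side2 => /(on_vline_eq r0 rx) E; subst x1' || subst x2'.
- by apply: n12; apply: (boxed_cells_eq cC1 cC2 nC1f nC2f bx1 bx2).
- exact: (no_third_cell cC2 cC1 cC3 nC2f nC1f C3_4 (nesym n23) (nesym n13) bx2 bx1
    B3 pq pr qr pyp qyq erefl erefl rx).
- exact: (no_third_cell cC1 cC2 cC3 nC1f nC2f C3_4 (nesym n13) (nesym n23) bx1 bx2
    B3 pq pr qr pyp qyq erefl erefl rx).
- by apply: n12; apply: (boxed_cells_eq cC1 cC2 nC1f nC2f bx1 bx2).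
Qed.

Lemma no_three_cells_two_bounded C1 C2 C3 p q r :
  is_cell L C1 -> is_cell L C2 -> is_cell L C3 -> ~ C1 far_pt -> ~ C2 far_pt ->
  (assoc_subset L C1 #<= `I_4)%card -> (assoc_subset L C2 #<= `I_4)%card ->
  (assoc_subset L C3 #<= `I_4)%card -> C1 <> C2 -> C1 <> C3 -> C2 <> C3 ->
  bounded_by C1 p q r -> bounded_by C2 p q r -> bounded_by C3 p q r ->
  p <> q -> p <> r -> q <> r -> False.
Proof.
move=> cC1 cC2 cC3 nC1f nC2f C1_4 C2_4 C3_4 n12 n13 n23 B1 B2 B3 pq pr qr.
have flat l : L l -> exists b y, on_hline b y l.
  move=> /axL/(axis_segment_on_line true)[[x lx]|[y ly]]; last by exists true, y.
  by exists false, x.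
have [[Lp _] [Lq _] [Lr _]] := B1.
have [bp [yp pyp]] := flat p Lp; have [bq [yq qyq]] := flat q Lq.
have [br [yr ryr]] := flat r Lr.
have perm C : bounded_by C p q r -> bounded_by C p r q /\ bounded_by C q r p by case.
have [ebpq|nbpq] := eqVneq bp bq.
  subst bq; exact: (no_three_cells_parallel cC1 cC2 cC3 nC1f nC2f C1_4 C2_4 C3_4 n12 n13 n23
    B1 B2 B3 pq pr qr pyp qyq).
have [ebr|ebr] : bp = br \/ bq = br
  by clear pyp qyq ryr; move: nbpq; case: bp; case: bq; case: br => //=; auto.
- subst br; exact: (no_three_cells_parallel cC1 cC2 cC3 nC1f nC2f C1_4 C2_4 C3_4 n12 n13 n23
    (perm _ B1).1 (perm _ B2).1 (perm _ B3).1 pr pq (nesym qr) pyp ryr).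
- subst br; exact: (no_three_cells_parallel cC1 cC2 cC3 nC1f nC2f C1_4 C2_4 C3_4 n12 n13 n23
    (perm _ B1).2 (perm _ B2).2 (perm _ B3).2 qr (nesym pq) (nesym pr) qyq ryr).
Qed.

End Far.

Lemma no_three_cells C1 C2 C3 p q r :
  is_cell L C1 -> is_cell L C2 -> is_cell L C3 ->
  (assoc_subset L C1 #<= `I_4)%card -> (assoc_subset L C2 #<= `I_4)%card ->
  (assoc_subset L C3 #<= `I_4)%card -> C1 <> C2 -> C1 <> C3 -> C2 <> C3 ->
  bounded_by C1 p q r -> bounded_by C2 p q r -> bounded_by C3 p q r ->
  p <> q -> p <> r -> q <> r -> False.
Proof.
move=> cC1 cC2 cC3 C1_4 C2_4 C3_4 n12 n13 n23 B1 B2 B3 pq pr qr.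
have [M M0 UM] := segments_bounded.
have nf C C' : is_cell L C -> is_cell L C' -> C <> C' -> C (far_pt M) -> ~ C' (far_pt M).
  by move=> cC cC' nCC' Cf C'f; exact/nCC'/(cell_eq cC cC' Cf C'f).
have [C1f|nC1f] := pselect (C1 (far_pt M)).
  exact: (no_three_cells_two_bounded M0 UM cC2 cC3 cC1 (nf _ _ cC1 cC2 n12 C1f)
    (nf _ _ cC1 cC3 n13 C1f) C2_4 C3_4 C1_4 n23 (nesym n12) (nesym n13) B2 B3 B1 pq pr qr).
have [C2f|nC2f] := pselect (C2 (far_pt M)).
  exact: (no_three_cells_two_bounded M0 UM cC1 cC3 cC2 nC1f (nf _ _ cC2 cC3 n23 C2f)
    C1_4 C3_4 C2_4 n13 n12 (nesym n23) B1 B3 B2 pq pr qr).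
exact: (no_three_cells_two_bounded M0 UM cC1 cC2 cC3 nC1f nC2f C1_4 C2_4 C3_4 n12 n13 n23
  B1 B2 B3 pq pr qr).
Qed.

End Arrangement.

Local Close Scope ring_scope.

Theorem lemma2 (R : realType) (L : set (set (R * R)))
  (finL : finite_set L) (axL : forall l, L l -> axis_segment l)
  (l l' l'' : set (R * R)) (Ll : L l) (Ll' : L l') (Ll'' : L l'')
  (n12 : l <> l') (n13 : l <> l'') (n23 : l' <> l'') :
  ([set S | rect_subsets L S /\ S l /\ S l' /\ S l''] #<= `I_2)%card.
Proof.
have le4 C : (assoc_subset L C #= `I_4)%card -> (assoc_subset L C #<= `I_4)%card.
  by rewrite card_eq_le => /andP[].
apply: card_le2_of_no_three => _ _ _ [[C1 [[cC1 C1_4] ->]] [A1 [A1' A1'']]]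
  [[C2 [[cC2 C2_4] ->]] [A2 [A2' A2'']]] [[C3 [[cC3 C3_4] ->]] [A3 [A3' A3'']]] n12' n13' n23'.
apply: (no_three_cells finL axL cC1 cC2 cC3 (le4 _ C1_4) (le4 _ C2_4) (le4 _ C3_4) _ _ _
  (And3 A1 A1' A1'') (And3 A2 A2' A2'') (And3 A3 A3' A3'') n12 n13 n23).
- by move=> E; apply: n12'; rewrite E.
- by move=> E; apply: n13'; rewrite E.
- by move=> E; apply: n23'; rewrite E.
Qed.
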